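(* Fix an odd integer $d\ge3$. Then there is a function $f(n)\to 0$ as $n\to\infty$ such that for every even $n$, the set $\mathrm{Zer}_1(d,n)=\{A\in\Omega_1(d,n):\operatorname{Per}(A)=0\}$ contains vertices of the polytope $\Omega_1(d,n)$ from at least $n^{n^{3/2}(1/2-f(n))}$ distinct species.
   Context: Let $I_n=\{1,\dots,n\}$. A $d$-dimensional matrix of order $n$ is a function $I_n^d\to\mathbb R$. A line is the set of positions obtained by varying one coordinate and fixing the others. A diagonal is a selection of $n$ positions any two of which differ in every coordinate; $\operatorname{Per}(A)$ is the sum over diagonals of the product of the entries on the diagonal. $\Omega_1(d,n)$ is the set of non-negative $d$-dimensional matrices of order $n$ whose entries in each line sum to $1$; it is a convex polytope. The wreath product $\mathcal S_n\wr\mathcal S_d$ acts on $d$-dimensional matrices of order $n$ by permuting the coordinates and independently permuting the values within each coordinate; this action preserves $\Omega_1(d,n)$, and a species is an orbit of this action. *)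

From HB Require Import structures.
From mathcomp Require Import all_boot all_order all_algebra all_fingroup.
From mathcomp Require Import all_classical all_reals all_analysis.
Set Implicit Arguments. Unset Strict Implicit. Unset Printing Implicit Defensive.
Import Order.TTheory GRing.Theory Num.Theory.
Local Open Scope ring_scope.

Definition pos (d n : nat) := {ffun 'I_d -> 'I_n}.
Definition dmat (R : Type) (d n : nat) := {ffun pos d n -> R}.

(* x with coordinate k replaced by i; {upd x k i | i < n} is a line *)
Definition upd (d n : nat) (x : pos d n) (k : 'I_d) (i : 'I_n) : pos d n :=
  [ffun j => if j == k then i else x j].

Definition in_Omega1 (R : realType) (d n : nat) (A : dmat R d n) : Prop :=
  (forall x, 0 <= A x) /\
  (forall (k : 'I_d) (x : pos d n), \sum_(i < n) A (upd x k i) = 1).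

Definition is_diagonal (d n : nat) (D : {set pos d n}) : bool :=
  (#|D| == n) &&
  [forall x in D, forall y in D, (x != y) ==> [forall k, x k != y k]].

Definition Per (R : realType) (d n : nat) (A : dmat R d n) : R :=
  \sum_(D : {set pos d n} | is_diagonal D) \prod_(x in D) A x.

Definition is_vertex (R : realType) (d n : nat) (A : dmat R d n) : Prop :=
  in_Omega1 A /\
  forall (B C : dmat R d n) (t : R), in_Omega1 B -> in_Omega1 C ->
    0 < t < 1 -> (forall x, A x = t * B x + (1 - t) * C x) -> B = C.

(* action of (s; t_1..t_d) in S_n wr S_d: permute coordinates by s and
   the values in coordinate k by t k *)
Definition wr_act (R : realType) (d n : nat) (s : {perm 'I_d})
  (t : 'I_d -> {perm 'I_n}) (A : dmat R d n) : dmat R d n :=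
  [ffun x : pos d n => A [ffun k => t k (x (s k))]].

Definition same_species (R : realType) (d n : nat) (A B : dmat R d n) : Prop :=
  exists (s : {perm 'I_d}) (t : 'I_d -> {perm 'I_n}), B = wr_act s t A.

(* Zero-permanent vertices come from Latin squares.  For a Latin square L of
   order n, the 0/1 matrix of dimension d with a 1 at x iff
   x_last = L(x_first, sum of the middle coordinates mod n) has a single 1 in
   every line, hence is a vertex of Omega_1(d, n).  Take
   L(r, c) = sigma(r, c) + c mod n with sigma(r, c) within a few units of r.
   Over a diagonal every coordinate sums to C(n, 2), so a diagonal of 1s
   would force sum sigma = 0 (mod n) when d is odd and n even; but sum sigma
   is within n/2 of C(n, 2) = n/2 (n - 1), strictly between two multiples of
   n.  Hence Per = 0.  Letting one bit choose sigma independently in each of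
   about n^2/48 blocks of 4 rows and 2 columns yields 2^(n^2/48) distinct
   such matrices, while a species has at most d! (n!)^d members, which
   eventually leaves more than n^(n^(3/2)/2) species. *)
From HB Require Import structures.
From mathcomp Require Import all_boot all_order all_algebra all_fingroup.
From mathcomp Require Import all_classical all_reals all_analysis.
From mathcomp Require Import zify lra.
From Stdlib Require PeanoNat.
Import Order.TTheory GRing.Theory Num.Theory numFieldNormedType.Exports.

Set Implicit Arguments. Unset Strict Implicit. Unset Printing Implicit Defensive.

Definition is_latin_square (n : nat) (L : nat -> nat -> nat) : Prop :=
  [/\ forall r c, r < n -> c < n -> L r c < n,
      forall c r r', r < n -> r' < n -> c < n -> L r c = L r' c -> r = r' &
      forall r c c', r < n -> c < n -> c' < n -> L r c = L r c' -> c = c'].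

(* For each t < 4 the two offsets block_perm b p t + p (p = 0, 1) are
   {1, 2}, {1, 2}, {3, 4} or {0, 3} whatever b is: one odd and one even.
   This is what keeps each row of [block_latin] injective. *)
Definition block_perm (b p : bool) (t : nat) : nat :=
  match t with
  | 0 => if b then (if p then 0 else 2) else 1
  | 1 => if b then 1 else (if p then 0 else 2)
  | 2 => 3
  | _ => if p then 2 else 0
  end.

Lemma block_perm_le3 b p t : block_perm b p t <= 3.
Proof. by case: t => [|[|[|t]]]; case: b; case: p. Qed.

Lemma block_perm_inj b p t t' : t < 4 -> t' < 4 ->
  block_perm b p t = block_perm b p t' -> t = t'.
Proof. by case: t => [|[|[|[|t]]]] //; case: t' => [|[|[|[|t']]]] //; case: b; case: p. Qed.

Lemma block_offset_parity b b' p p' t : t < 4 ->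
  odd (block_perm b p t + p) = odd (block_perm b' p' t + p') ->
  block_perm b p t + p = block_perm b' p' t + p'.
Proof. by case: t => [|[|[|[|t]]]] //; case: b; case: b'; case: p; case: p'. Qed.

Lemma block_offset_inj b p p' t : t < 4 ->
  block_perm b p t + p = block_perm b p' t + p' -> p = p'.
Proof. by case: t => [|[|[|[|t]]]] //; case: b; case: p; case: p'. Qed.

Section BlockLatinSquare.

Variables (n : nat) (b : seq bool).

(* 24 * nblocks < n keeps the total displacement 12 * nblocks below n / 2,
   as [bin2_near_modn_neq0] requires. *)
Definition nblocks := n.-1 %/ 24.

Definition shift_bound (r : nat) := if r < 4 * nblocks then 3 else 0.

Definition block_bit (r c : nat) : bool := nth false b ((r %/ 4) * n./2 + c./2).

Definition rowshift (r c : nat) : nat :=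
  if r < 4 * nblocks then 4 * (r %/ 4) + block_perm (block_bit r c) (odd c) (r %% 4)
  else r.

Definition block_latin (r c : nat) : nat := (rowshift r c + c) %% n.

Lemma nblocks_le : 24 * nblocks <= n.-1.
Proof. rewrite /nblocks; lia. Qed.

Lemma rowshift_le r c : rowshift r c <= r + shift_bound r.
Proof.
rewrite /rowshift /shift_bound; case: ifP => _; last by rewrite addn0.
have := block_perm_le3 (block_bit r c) (odd c) (r %% 4); lia.
Qed.

Lemma rowshift_ge r c : r <= rowshift r c + shift_bound r.
Proof. rewrite /rowshift /shift_bound; case: ifP => _; lia. Qed.

Lemma rowshift_lt r c : r < n -> rowshift r c < n.
Proof.
rewrite /rowshift; case: ifP => // r_in _.
have := block_perm_le3 (block_bit r c) (odd c) (r %% 4); have := nblocks_le; lia.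
Qed.

Lemma rowshift_inj c r r' : rowshift r c = rowshift r' c -> r = r'.
Proof.
rewrite /rowshift.
have le3 := block_perm_le3 (block_bit r c) (odd c) (r %% 4).
have le3' := block_perm_le3 (block_bit r' c) (odd c) (r' %% 4).
case: ifP => r_in; case: ifP => r'_in => E; try lia.
have same_block : r %/ 4 = r' %/ 4 by lia.
rewrite /block_bit same_block in E.
have : r %% 4 = r' %% 4.
  apply: (block_perm_inj (b := block_bit r' c) (p := odd c)); rewrite ?ltn_pmod //.
  by rewrite /block_bit; lia.
lia.
Qed.

Lemma block_latin_inj_row c r r' : r < n -> r' < n ->
  block_latin r c = block_latin r' c -> r = r'.
Proof.
move=> rn r'n /eqP; rewrite /block_latin eqn_modDr !modn_small ?rowshift_lt //.
by move/eqP/rowshift_inj.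
Qed.

Lemma block_latin_inj_col r c c' : ~~ odd n -> r < n -> c < n -> c' < n ->
  block_latin r c = block_latin r c' -> c = c'.
Proof.
move=> n_even rn cn c'n; rewrite /block_latin /rowshift.
case: ifP => r_in; last first.
  by move/eqP; rewrite ![r + _]addnC eqn_modDr !modn_small // => /eqP.
set base := 4 * _; set o := block_perm _ _ _; set o' := block_perm _ _ _.
have t4 : r %% 4 < 4 by rewrite ltn_pmod.
have hc := odd_double_half c; have hc' := odd_double_half c'.
have -> : base + o + c = base + ((o + odd c) + (c./2).*2) by lia.
have -> : base + o' + c' = base + ((o' + odd c') + (c'./2).*2) by lia.
move=> /eqP; rewrite eqn_modDl => /eqP E.
have /(block_offset_parity t4) same_offset : odd (o + odd c) = odd (o' + odd c').
  by have := congr1 odd E; rewrite !odd_mod ?(negbTE n_even) // !oddD !odd_double !addbF.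
move: E; rewrite same_offset => /eqP; rewrite eqn_modDl !modn_small; try lia.
move=> /eqP /double_inj same_pair.
move: same_offset; rewrite /o /o' /block_bit same_pair => /(block_offset_inj t4).
lia.
Qed.

Lemma block_latin_start j i : j < nblocks -> i < n./2 ->
  block_latin (4 * j) (2 * i) =
    (4 * j + 2 * i + (if nth false b (j * n./2 + i) then 2 else 1)) %% n.
Proof.
move=> j_lt i_lt; rewrite /block_latin /rowshift ltn_pmul2l // j_lt /block_bit.
by rewrite mulKn // modnMr oddM andFb mul2n doubleK addnAC; case: nth.
Qed.

Lemma sum_shift_bound : \sum_(r < n) shift_bound r = 12 * nblocks.
Proof.
have bn : 4 * nblocks <= n by have := nblocks_le; lia.
rewrite -(big_mkord xpredT shift_bound) (big_cat_nat _ bn) //=.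
rewrite (eq_big_nat _ _ (F2 := fun=> 3)) => [|r /andP[_ r_lt]]; last by rewrite /shift_bound r_lt.
rewrite [X in _ + X](eq_big_nat _ _ (F2 := fun=> 0)) => [|r /andP[r_ge _]]; last first.
  by rewrite /shift_bound ltnNge r_ge.
by rewrite !sum_nat_const_nat; lia.
Qed.

End BlockLatinSquare.

Lemma block_latin_is_latin_square n b : 0 < n -> ~~ odd n ->
  is_latin_square n (block_latin n b).
Proof.
move=> n_gt0 n_even; split=> [r c _ _|c r r' r_lt r'_lt _|r c c' r_lt]; first exact: ltn_pmod.
  exact: block_latin_inj_row.
exact: block_latin_inj_col.
Qed.

Lemma block_latin_bits_inj n (b b' : seq bool) :
  size b = nblocks n * n./2 -> size b' = size b ->
  (forall r c, r < n -> c < n -> block_latin n b r c = block_latin n b' r c) -> b = b'.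
Proof.
move=> size_b size_b' same_latin; apply: (@eq_from_nth _ false) => // idx.
rewrite size_b => idx_lt.
have m_gt0 : 0 < n./2 by move: idx_lt; case: n./2 => //; rewrite muln0.
have q_gt0 : 0 < nblocks n by move: idx_lt; case: nblocks.
have q_le := nblocks_le n; have n_half := odd_double_half n.
have j_lt : idx %/ n./2 < nblocks n by rewrite ltn_divLR // mulnC.
have i_lt : idx %% n./2 < n./2 by rewrite ltn_pmod.
have := same_latin (4 * (idx %/ n./2)) (2 * (idx %% n./2)) ltac:(lia) ltac:(lia).
rewrite !block_latin_start // mulnC -divn_eq.
by case: nth; case: nth => // /eqP; rewrite eqn_modDl !modn_small //; lia.
Qed.

Lemma bin2_even n : ~~ odd n -> 'C(n, 2) = n./2 * n.-1.
Proof.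
move=> n_even; have n2 := odd_double_half n; rewrite (negbTE n_even) add0n in n2.
by rewrite bin2 -{1}n2 -mul2n -mulnA mul2n doubleK.
Qed.

Lemma odd_mul_bin2_mod n d : odd d -> ~~ odd n -> d * 'C(n, 2) = 'C(n, 2) %[mod n].
Proof.
move=> d_odd n_even; rewrite -(odd_double_half d) d_odd bin2_even //.
have n2 := odd_double_half n; rewrite (negbTE n_even) add0n in n2.
have -> : (1 + d./2.*2) * (n./2 * n.-1) = d./2 * n.-1 * n + n./2 * n.-1.
  by rewrite -{3}n2 -!mul2n; nia.
by rewrite modnMDl.
Qed.

Lemma bin2_near_modn_neq0 n P W : ~~ odd n -> 2 * W < n ->
  'C(n, 2) <= P + W -> P <= 'C(n, 2) + W -> P %% n != 0.
Proof.
move=> n_even W_lt; rewrite bin2_even //.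
have n2 := odd_double_half n; rewrite (negbTE n_even) add0n -mul2n in n2.
set m := n./2 in n2 *; rewrite -n2 in W_lt *.
move=> lo hi; apply/negP => /eqP P_mod; have := divn_eq P (2 * m).
rewrite P_mod addn0; set k := P %/ (2 * m) => P_eq.
have : (m.-1 * (2 * m) < k * (2 * m)) && (k * (2 * m) < m * (2 * m)) by apply/andP; split; lia.
by rewrite !ltn_pmul2r; lia.
Qed.

Section Diagonals.

Variables (d n : nat) (D : {set pos d n}).
Hypothesis diagD : is_diagonal D.

Lemma diagonal_coord_inj k : {in D &, injective (fun x : pos d n => x k)}.
Proof.
case/andP: diagD => _ /forall_inP distinct x y xD yD /= xy_k.
apply/eqP; apply: contraT => x_neq_y.
by have /forall_inP/(_ y yD)/implyP/(_ x_neq_y)/forallP/(_ k) := distinct x xD; rewrite xy_k eqxx.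
Qed.

Lemma diagonal_coord_sum k (g : nat -> nat) :
  \sum_(x in D) g (x k) = \sum_(i < n) g i.
Proof.
have /andP[/eqP cardD _] := diagD.
rewrite -(big_imset (fun i : 'I_n => g i) (@diagonal_coord_inj k)) /=.
apply: eq_bigl => i; suff -> : [set (x : pos d n) k | x in D] = [set: 'I_n]%SET.
  by rewrite finset.in_setT.
apply/eqP; rewrite eqEcard finset.subsetT cardsT card_ord.
by rewrite card_in_imset ?cardD ?leqnn //; exact: diagonal_coord_inj.
Qed.

End Diagonals.

Section Vertices.

Local Open Scope ring_scope.
Variables (R : realType) (d n : nat).
Hypothesis d_gt0 : (0 < d)%N.

Lemma Omega1_le1 (A : dmat R d n) x : in_Omega1 A -> A x <= 1.
Proof.
case=> A_ge0 A_lines; pose k := Ordinal d_gt0.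
have upd_id : upd x k (x k) = x by apply/ffunP => j; rewrite ffunE; case: eqP => // ->.
rewrite -{1}upd_id -(A_lines k x) (bigD1 (x k)) //= lerDl sumr_ge0 // => i _.
Qed.

Lemma vertex_of_01 (A : dmat R d n) : in_Omega1 A ->
  (forall x, A x = 0 \/ A x = 1) -> is_vertex A.
Proof.
move=> A_Om A01; split => // B C t B_Om C_Om /andP[t_gt0 t_lt1] A_mix.
apply/ffunP => x; have := A_mix x.
have := Omega1_le1 x B_Om; have := Omega1_le1 x C_Om.
have := B_Om.1 x; have := C_Om.1 x.
by case: (A01 x) => ->; nra.
Qed.

End Vertices.

Section LatinMatrix.

Variables (R : realType) (d n : nat).

(* The dimension is d.+2 so that the first and last coordinates are ord0 and
   ord_max. *)
Definition mid_coord (k : 'I_d.+2) : bool := (k != ord0) && (k != ord_max).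

Definition mid_sum (x : pos d.+2 n) : nat := \sum_(k | mid_coord k) x k.

Definition latin_mat (L : nat -> nat -> nat) : dmat R d.+2 n :=
  [ffun x : pos d.+2 n => if x ord_max == L (x ord0) (mid_sum x %% n) :> nat then 1%R else 0%R].

Lemma card_mid_coord : #|[pred k | mid_coord k]| = d.
Proof.
have ends : [predC [pred k | mid_coord k]] =i pred2 ord0 ord_max.
  by move=> k; rewrite !inE /mid_coord negb_and !negbK.
have := cardC [pred k | mid_coord k]; rewrite (eq_card ends) card2 card_ord.
by rewrite -(inj_eq val_inj) /= addn2 => -[].
Qed.

Lemma upd_same (x : pos d.+2 n) k i : upd x k i k = i.
Proof. by rewrite ffunE eqxx. Qed.

Lemma upd_other (x : pos d.+2 n) k k' i : k' != k -> upd x k i k' = x k'.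
Proof. by rewrite ffunE => /negbTE ->. Qed.

Lemma mid_sum_upd_out (x : pos d.+2 n) k i : ~~ mid_coord k -> mid_sum (upd x k i) = mid_sum x.
Proof.
move=> k_end; apply: eq_bigr => k' k'_mid; rewrite upd_other //.
by apply: contraNneq k_end => <-.
Qed.

Lemma mid_sum_upd_in (x : pos d.+2 n) k i : mid_coord k ->
  mid_sum (upd x k i) = i + \sum_(k' | mid_coord k' && (k' != k)) x k'.
Proof.
move=> k_mid; rewrite /mid_sum (bigD1 k) //= upd_same; congr (_ + _).
by apply: eq_bigr => k' /andP[_ k'_neq]; rewrite upd_other.
Qed.

Lemma sum_indicator_inj (g : nat -> nat) (v : nat) :
  (forall i, i < n -> g i < n) ->
  (forall i j, i < n -> j < n -> g i = g j -> i = j) -> v < n ->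
  (\sum_(i < n) (if v == g i then 1 else 0) = 1 :> R)%R.
Proof.
move=> g_lt g_inj v_lt.
pose G (i : 'I_n) : 'I_n := Ordinal (g_lt i (ltn_ord i)).
have G_inj : injective G.
  by move=> i j /(congr1 val) /(g_inj _ _ (ltn_ord i) (ltn_ord j)) /val_inj.
rewrite -(reindex_inj (P := xpredT) (F := fun i : 'I_n => if v == i then 1 else 0)%R G_inj) /=.
by rewrite -big_mkcond (big_pred1 (Ordinal v_lt)) // => i; rewrite /= -(inj_eq val_inj).
Qed.

Lemma ord0_neq_max : (ord0 : 'I_d.+2) != ord_max.
Proof. by rewrite -(inj_eq val_inj). Qed.

Lemma latin_mat_lines L : is_latin_square n L ->
  forall k x, (\sum_(i < n) latin_mat L (upd x k i) = 1)%R.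
Proof.
case=> L_lt L_injl L_injr k x.
have n_gt0 : 0 < n := leq_ltn_trans (leq0n _) (ltn_ord (x ord0)).
have max_neq0 : ord_max != ord0 :> 'I_d.+2 by rewrite eq_sym ord0_neq_max.
have end0 : ~~ mid_coord ord0 by rewrite /mid_coord eqxx.
have end_max : ~~ mid_coord ord_max by rewrite /mid_coord eqxx andbF.
under eq_bigr => i _ do rewrite ffunE.
have [->|k_max] := eqVneq k ord_max.
  under eq_bigr => i _ do rewrite upd_same upd_other ?ord0_neq_max // mid_sum_upd_out // eq_sym.
  by apply: (sum_indicator_inj (g := id)) => //; apply: L_lt; rewrite ?ltn_pmod.
have [->|k_0] := eqVneq k ord0.
  under eq_bigr => i _ do rewrite upd_same upd_other ?max_neq0 // mid_sum_upd_out //.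
  apply: (sum_indicator_inj (g := L^~ (mid_sum x %% n))) => [i|i j|]; last exact: ltn_ord.
    by move=> i_lt; apply: L_lt; rewrite ?ltn_pmod.
  by move=> i_lt j_lt; apply: L_injl; rewrite ?ltn_pmod.
have k_mid : mid_coord k by rewrite /mid_coord k_max k_0.
have max_k : ord_max != k by rewrite eq_sym.
have zero_k : ord0 != k by rewrite eq_sym.
under eq_bigr => i _ do rewrite !upd_other // mid_sum_upd_in //.
set rest := \sum_(k' | _) _.
apply: (sum_indicator_inj (g := fun i => L (x ord0) ((i + rest) %% n))) => [i|i j|].
- by move=> i_lt; apply: L_lt; rewrite ?ltn_pmod.
- move=> i_lt j_lt L_eq.
  have /eqP := L_injr _ _ _ (ltn_ord _) (ltn_pmod _ n_gt0) (ltn_pmod _ n_gt0) L_eq.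
  by rewrite eqn_modDr !modn_small // => /eqP.
- exact: ltn_ord.
Qed.

Lemma latin_mat_vertex L : is_latin_square n L -> is_vertex (latin_mat L).
Proof.
move=> L_latin; apply: vertex_of_01 => // [|x]; last by rewrite ffunE; case: ifP; [right|left].
split=> [x|]; last exact: latin_mat_lines.
by rewrite ffunE; case: ifP => _; rewrite ?ler01 ?lexx.
Qed.

Lemma latin_mat_inj L L' : 0 < d -> (forall r c, r < n -> c < n -> L r c < n) ->
  latin_mat L = latin_mat L' -> forall r c, r < n -> c < n -> L r c = L' r c.
Proof.
move=> d_gt0 L_lt LL' r c r_lt c_lt.
pose k1 : 'I_d.+2 := inord 1.
have k1_mid : mid_coord k1 by rewrite /mid_coord -!(inj_eq val_inj) /= inordK //; lia.
have /andP[k1_ne0 k1_nemax] := k1_mid.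
pose zero : 'I_n := Ordinal (leq_ltn_trans (leq0n r) r_lt).
pose x : pos d.+2 n := [ffun k => if k == ord0 then Ordinal r_lt
  else if k == ord_max then Ordinal (L_lt r c r_lt c_lt)
  else if k == k1 then Ordinal c_lt else zero].
have x_mid : mid_sum x = c.
  rewrite /mid_sum (bigD1 k1) //= big1 => [|k /andP[/andP[k0 kmax] kk1]].
    by rewrite ffunE (negbTE k1_ne0) (negbTE k1_nemax) eqxx addn0.
  by rewrite ffunE (negbTE k0) (negbTE kmax) (negbTE kk1).
have := congr1 (fun A : dmat R d.+2 n => A x) LL'.
rewrite !ffunE /= x_mid (modn_small c_lt) eqxx.
by case: eqP => // _; case: eqP => // _ /eqP; rewrite oner_eq0.
Qed.

Lemma Per_latin_mat_eq0 (sigma : nat -> nat -> nat) (w : nat -> nat) :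
  odd d -> ~~ odd n ->
  (forall r c, sigma r c <= r + w r) -> (forall r c, r <= sigma r c + w r) ->
  2 * \sum_(i < n) w i < n ->
  Per (latin_mat (fun r c => (sigma r c + c) %% n)) = 0%R.
Proof.
move=> d_odd n_even sigma_le sigma_ge W_lt; rewrite /Per big1 // => D diagD.
set A := latin_mat _.
case: (boolP [exists x in D, A x == 0%R]) => [/exists_inP[x xD /eqP Ax0]|/exists_inPn A_ne0].
  by rewrite (bigD1 x) //= Ax0 mul0r.
exfalso.
have on_graph x : x \in D ->
    x ord_max = (sigma (x ord0) (mid_sum x %% n) + mid_sum x %% n) %% n :> nat.
  by move=> xD; have := A_ne0 x xD; rewrite ffunE; case: ifP => [/eqP //|_]; rewrite eqxx.
have coord_sum k g := diagonal_coord_sum diagD k g.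
(* Each coordinate takes every value once on D, so all its sums over D are
   known; the last coordinate then pins down P modulo n. *)
have sum_ord : \sum_(i < n) i = 'C(n, 2) by rewrite -bin2_sum big_mkord.
set W := \sum_(i < n) w i in W_lt.
set P := \sum_(x in D) sigma (x ord0) (mid_sum x %% n).
have sum_mid : \sum_(x in D) mid_sum x = d * 'C(n, 2).
  rewrite /mid_sum exchange_big /= (eq_bigr (fun=> 'C(n, 2))) => [|k _]; last first.
    by rewrite (coord_sum k id).
  by rewrite -[d in RHS]card_mid_coord -sum_nat_const.
have P_mod : P = 0 %[mod n].
  have : 'C(n, 2) = P + d * 'C(n, 2) %[mod n].
    rewrite -{1}sum_ord -(coord_sum ord_max id) (eq_bigr _ on_graph) -sum_mid.
    by rewrite modn_summ big_split /= -modnDmr modn_summ modnDmr.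
  rewrite -modnDmr odd_mul_bin2_mod // modnDmr -{1}['C(n, 2)]add0n => /eqP.
  by rewrite eqn_modDr eq_sym => /eqP.
have hi : P <= 'C(n, 2) + W.
  rewrite -sum_ord -big_split -(coord_sum ord0 (fun i => i + w i)).
  by apply: leq_sum => x _; apply: sigma_le.
have lo : 'C(n, 2) <= P + W.
  rewrite /W -sum_ord -(coord_sum ord0 id) -(coord_sum ord0 w) -big_split.
  by apply: leq_sum => x _; apply: sigma_ge.
by move: (bin2_near_modn_neq0 n_even W_lt lo hi); rewrite P_mod mod0n.
Qed.

End LatinMatrix.

Lemma exists_large_transversal (T : finType) (r : rel T) (M : nat) :
  equivalence_rel r -> (forall x, #|[pred y | r x y]| <= M) ->
  exists X : {set T}, #|T| <= #|X| * M /\ {in X &, forall x y, r x y -> x = y}.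
Proof.
move=> r_eqv class_le.
have r_eqv_in : {in [set: T] & &, equivalence_rel r} by move=> x y z _ _ _; apply: r_eqv.
set P := equivalence_partition r [set: T].
have partP : finset.partition P [set: T] := equivalence_partitionP r_eqv_in.
have trX := transversalP partP.
exists (transversal P [set: T]); split.
  rewrite -cardsT (card_partition partP) (card_transversal trX) -sum_nat_const.
  apply: leq_sum => _ /imsetP[x _ ->]; apply: leq_trans (class_le x).
  by apply: subset_leq_card; apply/fintype.subsetP => y; rewrite !inE.
move=> x y xX yX rxy; apply: (pblock_inj trX) => //.
have [_ tiP _] := and3P partP.
apply: (same_pblock tiP); rewrite pblock_equivalence_partition ?inE //.
by have [rxx sym] := r_eqv x y x; rewrite -(sym rxy).
Qed.

Section Species.

Variables (R : realType) (d n : nat).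

Definition species_seq (A : dmat R d n) : seq (dmat R d n) :=
  [seq wr_act st.1 st.2 A | st : {perm 'I_d} * {ffun 'I_d -> {perm 'I_n}}].

Lemma size_species_seq A : size (species_seq A) = d`! * n`! ^ d.
Proof. by rewrite size_map -cardE card_prod card_ffun !card_Sn card_ord. Qed.

Lemma species_seqP A B : reflect (same_species A B) (B \in species_seq A).
Proof.
apply: (iffP mapP) => [[[s t] _ ->]|[s [t ->]]]; first by exists s, t.
exists (s, finfun t); rewrite ?mem_enum //=.
by apply/ffunP => x; rewrite !ffunE; congr (A _); apply/ffunP => k; rewrite !ffunE.
Qed.

Lemma same_species_refl (A : dmat R d n) : same_species A A.
Proof.
exists 1%g, (fun _ => 1%g).
by apply/ffunP => x; rewrite ffunE; congr (A _); apply/ffunP => k; rewrite ffunE !perm1.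
Qed.

Lemma same_species_sym (A B : dmat R d n) : same_species A B -> same_species B A.
Proof.
case=> s [t ->]; exists s^-1%g, (fun k => (t (s^-1 k))^-1)%g.
apply/ffunP => x; rewrite !ffunE; congr (A _); apply/ffunP => k.
by rewrite !ffunE permK permKV.
Qed.

Lemma same_species_trans (A B C : dmat R d n) :
  same_species A B -> same_species B C -> same_species A C.
Proof.
case=> s1 [t1 ->] [s2 [t2 ->]]; exists (s1 * s2)%g, (fun k => t2 (s1 k) * t1 k)%g.
by apply/ffunP => x; rewrite !ffunE; congr (A _); apply/ffunP => k; rewrite !ffunE !permM.
Qed.

Lemma exists_species_transversal (I : finType) (F : I -> dmat R d n) : injective F ->
  exists X : {set I}, #|I| <= #|X| * (d`! * n`! ^ d) /\
    {in X &, forall i j, same_species (F i) (F j) -> i = j}.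
Proof.
move=> F_inj.
have r_eqv : equivalence_rel (fun i j => F j \in species_seq (F i)).
  move=> i j k; split; first exact/species_seqP/same_species_refl.
  move=> /species_seqP ij; apply/species_seqP/species_seqP => [ik|jk].
    exact: same_species_trans (same_species_sym ij) ik.
  exact: same_species_trans ij jk.
have [|X [card_X X_inj]] := exists_large_transversal (M := d`! * n`! ^ d) r_eqv.
  move=> i; rewrite -(size_species_seq (F i)) cardE -(size_map F).
  apply: uniq_leq_size; first by rewrite (map_inj_uniq F_inj) enum_uniq.
  by move=> B /mapP[j]; rewrite mem_enum => ij ->.
by exists X; split=> // i j iX jX /species_seqP; apply: X_inj.
Qed.

End Species.

Local Notation sqrtn := PeanoNat.Nat.sqrt.

Lemma sqrtn_bounds n : sqrtn n * sqrtn n <= n < (sqrtn n).+1 * (sqrtn n).+1.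
Proof.
have [lo hi] := PeanoNat.Nat.sqrt_spec n (PeanoNat.Nat.le_0_l n).
by apply/andP; split; [apply/ssrnat.leP | apply/ssrnat.ltP].
Qed.

Lemma fact_le_expn n : n`! <= n ^ n.
Proof.
elim: n => // n IHn; rewrite factS expnS leq_mul2l /=.
by apply: leq_trans IHn _; case: n => // n; rewrite leq_exp2r.
Qed.

Lemma expn_le_pow2 n l a : n <= 2 ^ l -> n ^ a <= 2 ^ (l * a).
Proof. by move=> n_le; rewrite expnM; case: a => // a; rewrite leq_exp2r. Qed.

Lemma pow2_ge_linear u : 12 <= u -> 256 * u.+1 <= 2 ^ u.
Proof.
elim: u => // u IHu; rewrite leq_eqVlt => /predU1P[<- //|u_ge].
by rewrite expnS; have := IHu u_ge; lia.
Qed.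

Lemma nblocks_half_ge n : 101 <= n -> n * n <= 64 * (nblocks n * n./2).
Proof.
move=> n_ge; have q_lo := nblocks_le n.
have q_hi : n <= 24 * nblocks n + 24 by rewrite /nblocks; lia.
have m_lo := odd_double_half n; have m_hi : n <= n./2.*2 + 1 by case: (odd n) m_lo; lia.
have : n * n <= (24 * nblocks n + 24) * (n./2.*2 + 1) by apply: leq_mul.
have : 101 * n <= n * n by apply: leq_mul.
rewrite mulnDl !mulnDr -!mul2n; lia.
Qed.

Lemma fact_mul_factX_le D n : D <= n -> D`! * n`! ^ D <= n ^ (D + n * D).
Proof.
move=> D_le; rewrite expnD expnM; apply: leq_mul.
  by apply: leq_trans (fact_le_expn D) _; case: D D_le => // D D_le; rewrite leq_exp2r.
by case: D {D_le} => // D; rewrite leq_exp2r // fact_le_expn.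
Qed.

Lemma pow2_nblocks_dominates D : exists N, forall n, N <= n ->
  n ^ (n * (sqrtn n).+1) * (D`! * n`! ^ D) <= 2 ^ (nblocks n * n./2).
Proof.
(* n >= (3073 + D)^2 makes s := sqrtn n >= 3072 + D, so u := s %/ 256 >= 12
   and n <= 2 ^ (2 u); the exponent 2 u (n s.+1 + D + n D) <= n^2 / 64 is
   then small against nblocks n * n./2, which is about n^2 / 48. *)
exists ((3073 + D) * (3073 + D)) => n n_ge.
set s := sqrtn n; have /andP[s_lo s_hi] := sqrtn_bounds n; rewrite -/s in s_lo s_hi.
have s_ge : 3072 + D <= s.
  rewrite leqNgt; apply/negP => s_lt.
  have : s.+1 * s.+1 <= (3072 + D) * (3072 + D) by apply: leq_mul.
  lia.
set u := s %/ 256.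
have n_le : n <= 2 ^ (2 * u).
  have s_le : s.+1 <= 2 ^ u by have := @pow2_ge_linear u ltac:(lia); lia.
  by rewrite mulnC expnM; apply: leq_trans (ltnW s_hi) _; apply: leq_mul.
have D_le : D <= n by nia.
have lhs_le : n ^ (n * s.+1) * (D`! * n`! ^ D) <= n ^ (n * s.+1 + D + n * D).
  by rewrite -addnA expnD leq_mul2l fact_mul_factX_le ?orbT.
apply: leq_trans lhs_le _; apply: leq_trans (expn_le_pow2 _ n_le) _.
apply: leq_pexp2l => //.
have u_le : 256 * u <= s by rewrite /u; lia.
have exp_le : n * s.+1 + D + n * D <= 2 * (n * s).
  have : n * (s.+1 + D.+1) <= n * (2 * s) by apply: leq_mul; lia.
  rewrite !mulnDr !mulnSr; lia.
have cost_le : 2 * u * (2 * (n * s)) * 64 <= n * n.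
  have -> : 2 * u * (2 * (n * s)) * 64 = 256 * u * (n * s) by lia.
  apply: (@leq_trans (s * (n * s))); first exact: leq_mul.
  by rewrite mulnCA mulnC leq_mul.
have n_big : 101 <= n by apply: leq_trans s_lo; apply: (@leq_trans (s * 1)); rewrite ?leq_mul; lia.
have count_ge := nblocks_half_ge n_big.
have : 2 * u * (n * s.+1 + D + n * D) <= 2 * u * (2 * (n * s)) by apply: leq_mul.
lia.
Qed.

Local Open Scope classical_set_scope.
Local Open Scope ring_scope.

Lemma powR_three_halves_le (R : realType) (n : nat) : (0 < n)%N ->
  (n%:R : R) `^ (n%:R `^ (3 / 2) * 2^-1) <= (n ^ (n * (sqrtn n).+1))%:R.
Proof.
move=> n_gt0; set s := sqrtn n; have /andP[_ s_hi] := sqrtn_bounds n.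
have n_ge1 : (1 : R) <= n%:R by rewrite ler1n.
have pow_eq : (n%:R : R) `^ (3 / 2) = n%:R * Num.sqrt n%:R.
  rewrite (_ : 3 / 2 = 1 + 2^-1); last by lra.
  by rewrite powRD ?pnatr_eq0 -?lt0n ?n_gt0 ?implybT // powRr1 // powR12_sqrt.
have sqrt_le : Num.sqrt (n%:R : R) <= s.+1%:R.
  have : (n%:R : R) <= s.+1%:R ^+ 2 by rewrite -natrX ler_nat ltnW // expnS expn1.
  by rewrite -(ler_sqrt (n%:R)) ?exprn_ge0 // sqrtr_sqr ger0_norm.
have exp_le : (n%:R : R) `^ (3 / 2) * 2^-1 <= (n * s.+1)%N%:R.
  rewrite pow_eq natrM; apply: (@le_trans _ _ (n%:R * Num.sqrt n%:R)).
    have : 0 <= (n%:R : R) * Num.sqrt n%:R by rewrite mulr_ge0 ?sqrtr_ge0.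
    lra.
  exact: ler_wpM2l.
by apply: le_trans (ler_powR n_ge1 exp_le) _; rewrite powR_mulrn // natrX.
Qed.

Unset Implicit Arguments. Set Strict Implicit. Set Printing Implicit Defensive.

Theorem corollary2p6 (R : realType) (d : nat) (hd_odd : odd d) (hd3 : (3 <= d)%N) :
  exists f : nat -> R, f n @[n --> \oo] --> (0 : R) /\
    forall n : nat, (0 < n)%N -> ~~ odd n ->
      exists S : seq (dmat R d n),
        uniq S /\
        (forall A, A \in S -> is_vertex A /\ Per A = 0) /\
        (forall A B, A \in S -> B \in S -> same_species A B -> A = B) /\
        (n%:R `^ (n%:R `^ (3 / 2) * (2^-1 - f n)) <= (size S)%:R).
Proof.
case: d hd_odd hd3 => [|[|d]] //=; rewrite negbK => d_odd _.
have d_gt0 : (0 < d)%N by case: d d_odd.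
have [N count_le] := pow2_nblocks_dominates d.+2.
(* From N on the bound holds with f n = 0; below N, f n = 1/2 makes it
   trivial. *)
exists (fun n => if (N <= n)%N then 0 else 2^-1); split.
  by apply: cvg_near_cst; exists N => // n /= ->.
move=> n n_gt0 n_even.
pose F (b : (nblocks n * n./2).-tuple bool) := latin_mat R d n (block_latin n b).
have latin_sq b := block_latin_is_latin_square b n_gt0 n_even.
have F_inj : injective F.
  move=> b b' /latin_mat_inj eq_latin.
  apply/val_inj/block_latin_bits_inj; rewrite ?size_tuple //.
  by apply: eq_latin => //; case: (latin_sq b).
have [X [card_X X_species]] := exists_species_transversal F_inj.
exists [seq F b | b in X]; split; first by rewrite map_inj_uniq ?enum_uniq.
split.
  move=> _ /mapP[b _ ->]; split; first exact: latin_mat_vertex.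
  apply: Per_latin_mat_eq0 => //; [exact: rowshift_le | exact: rowshift_ge |].
  by rewrite sum_shift_bound; have := nblocks_le n; lia.
split.
  move=> _ _ /mapP[b bX ->] /mapP[b' b'X ->].
  by rewrite !mem_enum in bX b'X => /(X_species _ _ bX b'X) ->.
rewrite size_map -cardE; rewrite card_tuple card_bool in card_X.
case: ifP => N_le.
  rewrite subr0; apply: le_trans (powR_three_halves_le R n_gt0) _; rewrite ler_nat.
  have := leq_trans (count_le n N_le) card_X.
  by rewrite leq_pmul2r // muln_gt0 fact_gt0 expn_gt0 fact_gt0.
rewrite subrr mulr0 powRr0 ler1n lt0n; apply: contraTneq card_X => ->.
by rewrite mul0n -ltnNge expn_gt0.
Qed.
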